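(* Let $\mathcal{S}=(\mathcal{T},\mathcal{M},\Sigma)$ be an OBDA specification, $q$ a conjunctive query, $C$ a cover of $q$, and $q_C(\vec x)\leftarrow\bigwedge_{f\in C}q^{\mathrm{ucq}}_{|f}(\vec x_f)$ a cover-based JUCQ perfect rewriting of $q$ with respect to $\mathcal{T}$ and $C$. Then the optimized unfolding $\mathrm{unf}_{\mathrm{opt}}(q_C,\mathcal{M})$ is an $\mathcal{M}$-translation of $q_C$, i.e. $\mathrm{unf}_{\mathrm{opt}}(q_C,\mathcal{M})^{\mathcal{D}}=q_C^{\mathcal{A}_{(\mathcal{M},\mathcal{D})}}$ for every database instance $\mathcal{D}$ of $\Sigma$.
   Context: An OBDA specification consists of a DL-Lite$_\mathcal{R}$ TBox $\mathcal{T}$, a relational schema $\Sigma$, and a set $\mathcal{M}$ of mappings $L(\vec t)\leftsquigarrow V(\vec x)$ ($L$ a concept/role name, $\vec t$ a tuple of terms over $\vec x$ built from function symbols or variables, $V$ a view name with extension $V^{\mathcal{D}}$ given by a query over $\Sigma$, possibly a non-recursive Datalog query with function symbols). The virtual ABox is $\mathcal{A}_{(\mathcal{M},\mathcal{D})}=\{L(\vec t[\vec x\mapsto\vec a])\mid L(\vec t)\leftsquigarrow V(\vec x)\in\mathcal{M},\ \vec a\in V^{\mathcal{D}}\}$. A query $q_t$ is an $\mathcal{M}$-translation of $q'$ if $q_t^{\mathcal{D}}=q'^{\mathcal{A}_{(\mathcal{M},\mathcal{D})}}$ for every instance $\mathcal{D}$. A perfect rewriting $q_r$ of $q'$ w.r.t.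 $\mathcal{T}$ satisfies $\mathrm{cert}(q',(\mathcal{T},\mathcal{A}))=q_r^{\mathcal{A}}$ for all ABoxes $\mathcal{A}$. Unfolding of a CQ $q(\vec x)\leftarrow L_1(\vec v_1),\dots,L_n(\vec v_n)$: the Datalog query $(q_{\mathrm{unf}}(\vec x),\Pi)$ with $\Pi$ a minimal set of rules containing, for every tuple $(m_1,\dots,m_n)$ of mappings with $m_i=L_i(\vec f_i(\vec x_i))\leftsquigarrow V_i(\vec z_i)$ and every mgu $\sigma$ of $\{(L_i(\vec v_i),L_i(\vec f_i(\vec x_i)))\}$, the rule $q_{\mathrm{unf}}(\sigma(\vec x))\leftarrow V_1(\sigma(\vec z_1)),\dots,V_n(\sigma(\vec z_n))$; UCQs are unfolded CQ-wise. Cover: a collection $C$ of nonempty subsets (fragments) of the atom set of $q$ covering it, none included in another; fragment query $q_{|f}(\vec x_f)$ has the atoms of $f$ and answer variables the answer variables of $q$ in $f$ plus existential variables shared with another fragment; $q^{\mathrm{ucq}}_{|f}$ is a UCQ perfect rewriting of it; $q_C$ is a cover-based JUCQ perfect rewriting if it is a perfect rewriting of $q$. Let $\mathrm{Aux}_f$ be fresh predicates, $U_f$ view names for $\mathrm{unf}(q^{\mathrm{ucq}}_{|f},\mathcal{M})$, $\mathcal{M}^{\mathrm{aux}}=\{\mathrm{Aux}_f(\vec x_f)\leftsquigarrow U_f(\vec x_f)\mid f\in C\}$, and $q^{\mathrm{aux}}_C(\vec x)\leftarrow\bigwedge_{f\in C}\mathrm{Aux}_f(\vec x_f)$. Split: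 if $m=L(\vec x)\leftsquigarrow U(\vec x)$ with $U$ a view for a Datalog query $(U(\vec x),\{U(\vec f_i(\vec x_i))\leftarrow B_i\mid1\le i\le n\})$, then $\mathrm{split}(m)=\{L(\vec f_i(\vec x_i))\leftsquigarrow B_i\}$; otherwise $\mathrm{split}(m)=\{m\}$; $\mathrm{split}(\mathcal{M})=\bigcup_m\mathrm{split}(m)$. Signature of $L(\vec f(\vec x))\leftsquigarrow V$ is $(L,\vec f)$. Wrap: for each signature $(L,\vec f)$ with mappings $\{L(\vec f(\vec v_i))\leftsquigarrow V_i(\vec v_i)\}_{i}$ of that signature, replace them by the single mapping $L(\vec f(\vec v))\leftsquigarrow W(\vec v)$, $W$ a fresh view for $(W(\vec v),\{W(\vec v_i)\leftarrow V_i(\vec v_i)\}_i)$; $\mathrm{wrap}(\mathcal{M})$ is the union over all signatures. Optimized unfolding: $\mathrm{unf}_{\mathrm{opt}}(q_C,\mathcal{M}):=\mathrm{unf}(q^{\mathrm{aux}}_C(\vec x),\mathrm{wrap}(\mathrm{split}(\mathcal{M}^{\mathrm{aux}})))$. *)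

From mathcomp Require Import all_boot.
From Stdlib Require List.
Set Implicit Arguments. Unset Strict Implicit. Unset Printing Implicit Defensive.

Inductive gterm := GC (c : nat) | GF (f : nat) (args : seq gterm).

Inductive term := TVar (x : nat) | TCst (c : nat) | TFn (f : nat) (args : seq term).

Fixpoint gsubst (s : nat -> gterm) (t : term) : gterm :=
  match t with
  | TVar x => s x
  | TCst c => GC c
  | TFn f ts => GF f (map (gsubst s) ts)
  end.

Fixpoint tsubst (s : nat -> term) (t : term) : term :=
  match t with
  | TVar x => s x
  | TCst c => TCst c
  | TFn f ts => TFn f (map (tsubst s) ts)
  end.

Fixpoint trename (r : nat -> nat) (t : term) : term :=
  match t with
  | TVar x => TVar (r x)
  | TCst c => TCst c
  | TFn f ts => TFn f (map (trename r) ts)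
  end.

Fixpoint term_vars (t : term) : seq nat :=
  match t with
  | TVar x => [:: x]
  | TCst _ => [::]
  | TFn _ ts => flatten (map term_vars ts)
  end.

Fixpoint no_cst (t : term) : bool :=
  match t with
  | TVar _ => true
  | TCst _ => false
  | TFn _ ts => all no_cst ts
  end.

Fixpoint term_eqb (s t : term) {struct s} : bool :=
  match s, t with
  | TVar x, TVar y => x == y
  | TCst c, TCst d => c == d
  | TFn f ss, TFn g ts =>
      (f == g) &&
      (fix go (ss ts : seq term) : bool :=
         match ss, ts with
         | [::], [::] => true
         | s1 :: ss1, t1 :: ts1 => term_eqb s1 t1 && go ss1 ts1
         | _, _ => false
         end) ss ts
  | _, _ => false
  end.

Fixpoint terms_eqb (ss ts : seq term) : bool :=
  match ss, ts with
  | [::], [::] => true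
  | s1 :: ss1, t1 :: ts1 => term_eqb s1 t1 && terms_eqb ss1 ts1
  | _, _ => false
  end.

Fixpoint shape (t : term) : term :=
  match t with
  | TVar _ => TVar 0
  | TCst c => TCst c
  | TFn f ts => TFn f (map shape ts)
  end.

Fixpoint relabel (t : term) (n : nat) {struct t} : term * nat :=
  match t with
  | TVar _ => (TVar n, n.+1)
  | TCst c => (TCst c, n)
  | TFn f ts =>
      let p := (fix go (ts : seq term) (n : nat) : seq term * nat :=
                  match ts with
                  | [::] => ([::], n)
                  | t1 :: ts1 =>
                      let p1 := relabel t1 n in
                      let p2 := go ts1 p1.2 in (p1.1 :: p2.1, p2.2)
                  end) ts n in
      (TFn f p.1, p.2)
  end.

Fixpoint relabel_seq (ts : seq term) (n : nat) : seq term * nat :=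
  match ts with
  | [::] => ([::], n)
  | t1 :: ts1 =>
      let p1 := relabel t1 n in
      let p2 := relabel_seq ts1 p1.2 in (p1.1 :: p2.1, p2.2)
  end.

Fixpoint vars_only (ts : seq term) : option (seq nat) :=
  match ts with
  | [::] => Some [::]
  | TVar x :: ts1 => if vars_only ts1 is Some xs then Some (x :: xs) else None
  | _ => None
  end.

(* Ontology predicates (concept names, role names, fresh Aux_f)       *)

Inductive pname := PConcept (n : nat) | PRole (n : nat) | PAux (n : nat).

Definition pname_eqb (a b : pname) : bool :=
  match a, b with
  | PConcept n, PConcept m => n == m
  | PRole n, PRole m => n == m
  | PAux n, PAux m => n == m
  | _, _ => false
  end.

Definition gatom := (pname * seq gterm)%type.
Definition catom := (pname * seq nat)%type.

Definition schema := seq (nat * nat).          (* relation name, arity *)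
Definition instance := seq (nat * seq nat).

Definition instance_of (Sigma : schema) (D : instance) : Prop :=
  forall r tup, List.In (r, tup) D -> List.In (r, size tup) Sigma.

Inductive dpred := DRel (r : nat) | DIdb (p : nat).
Record drule := DRule { dhead : nat * seq term ; dbody : seq (dpred * seq term) }.
Record dquery := DQuery { dgoal : nat ; dprog : seq drule }.

Inductive dl_holds (D : instance) (P : seq drule) : dpred -> seq gterm -> Prop :=
| dl_edb r tup : List.In (r, tup) D -> dl_holds D P (DRel r) (map GC tup)
| dl_rule rl (s : nat -> gterm) :
    List.In rl P ->
    (forall a, List.In a (dbody rl) -> dl_holds D P a.1 (map (gsubst s) a.2)) ->
    dl_holds D P (DIdb (dhead rl).1) (map (gsubst s) (dhead rl).2).

Definition dl_nonrecursive (P : seq drule) : Prop :=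
  exists rank : nat -> nat, forall rl, List.In rl P ->
    forall p ts, List.In (DIdb p, ts) (dbody rl) -> rank p < rank (dhead rl).1.

Definition dquery_over (Sigma : schema) (Q : dquery) : Prop :=
  dl_nonrecursive (dprog Q) /\
  forall rl r ts, List.In rl (dprog Q) -> List.In (DRel r, ts) (dbody rl) ->
    List.In (r, size ts) Sigma.

(* A view is either a base view name (defined by a Datalog query over
   Sigma), or a (non-recursive) Datalog query with a single IDB predicate
   whose rules have bodies over views:  V(head) <- V1(ts1), ..., Vk(tsk). *)
Inductive view :=
| VBase (v : nat)
| VDef (rules : seq (seq term * seq (view * seq term))).

Definition vatom := (view * seq term)%type.
Definition vrule := (seq term * seq vatom)%type.

Inductive vholds (vdefs : nat -> dquery) (D : instance) : view -> seq gterm -> Prop :=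
| vh_base v tup :
    dl_holds D (dprog (vdefs v)) (DIdb (dgoal (vdefs v))) tup -> vholds vdefs D (VBase v) tup
| vh_def (rules : seq vrule) (r : vrule) (s : nat -> gterm) :
    List.In r rules ->
    (forall a, List.In a r.2 -> vholds vdefs D a.1 (map (gsubst s) a.2)) ->
    vholds vdefs D (VDef rules) (map (gsubst s) r.1).

(* mapping  L(t) <~ source,  source a conjunction of view atoms *)
Record mapping := Mapping { mhead : pname * seq term ; msrc : seq vatom }.

Definition dmap : mapping := Mapping (PAux 0, [::]) [::].
Definition dcatom : catom := (PAux 0, [::]).

Definition virtual_abox (vdefs : nat -> dquery) (D : instance) (M : seq mapping)
  : gatom -> Prop :=
  fun a => exists m (s : nat -> gterm), List.In m M /\
    (forall b, List.In b (msrc m) -> vholds vdefs D b.1 (map (gsubst s) b.2)) /\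
    a = ((mhead m).1, map (gsubst s) (mhead m).2).

Inductive role := RAtom (p : nat) | RInv (p : nat).
Inductive basic := BAtom (a : nat) | BExists (r : role).
Inductive concept := CPos (b : basic) | CNeg (b : basic).
Inductive genrole := GPos (r : role) | GNeg (r : role).
Inductive tbox_axiom := CIncl (b : basic) (c : concept) | RIncl (r : role) (e : genrole).
Definition tbox := seq tbox_axiom.

Record interp := Interp {
  idom : Type ;
  iconc : nat -> idom -> Prop ;
  irole : nat -> idom -> idom -> Prop ;
  iind : gterm -> idom }.

Definition role_sem (I : interp) (r : role) (x y : idom I) : Prop :=
  match r with RAtom p => @irole I p x y | RInv p => @irole I p y x end.
Definition basic_sem (I : interp) (b : basic) (x : idom I) : Prop :=
  match b with BAtom a => @iconc I a x | BExists r => exists y, role_sem r x y end.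
Definition concept_sem (I : interp) (c : concept) (x : idom I) : Prop :=
  match c with CPos b => basic_sem b x | CNeg b => ~ basic_sem b x end.
Definition genrole_sem (I : interp) (e : genrole) (x y : idom I) : Prop :=
  match e with GPos r => role_sem r x y | GNeg r => ~ role_sem r x y end.
Definition axiom_sat (I : interp) (ax : tbox_axiom) : Prop :=
  match ax with
  | CIncl b c => forall x : idom I, basic_sem b x -> concept_sem c x
  | RIncl r e => forall x y : idom I, role_sem r x y -> genrole_sem e x y
  end.

Definition assertion_sat (I : interp) (a : gatom) : Prop :=
  match a with
  | (PConcept n, [:: t]) => @iconc I n (@iind I t)
  | (PRole n, [:: t; u]) => @irole I n (@iind I t) (@iind I u)
  | _ => False
  end.

Definition abox := seq gatom.
Definition abox_wf (A : abox) : Prop :=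
  forall a, List.In a A ->
    match a with
    | (PConcept _, [:: _]) => True
    | (PRole _, [:: _; _]) => True
    | _ => False
    end.

(* models of (T, A), under the unique name assumption *)
Definition is_model (T : tbox) (A : abox) (I : interp) : Prop :=
  injective (@iind I) /\
  (forall ax, List.In ax T -> axiom_sat I ax) /\
  (forall a, List.In a A -> assertion_sat I a).

Record cq := CQ { cq_ans : seq nat ; cq_body : seq catom }.
Definition ucq := seq cq.
(* JUCQ  q(x) <- /\_k Q_k(x_k) *)
Record jucq := JUCQ { j_ans : seq nat ; j_parts : seq (seq nat * ucq) }.

Definition cq_over_ontology (q : cq) : Prop :=
  forall a, List.In a (cq_body q) ->
    match a with
    | (PConcept _, [:: _]) => True
    | (PRole _, [:: _; _]) => True
    | _ => False
    end.

(* evaluation over a (possibly virtual) ABox *)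
Definition cq_eval (A : gatom -> Prop) (q : cq) (tup : seq gterm) : Prop :=
  exists nu : nat -> gterm, tup = map nu (cq_ans q) /\
    forall a, List.In a (cq_body q) -> A (a.1, map nu a.2).
Definition ucq_eval (A : gatom -> Prop) (Q : ucq) (tup : seq gterm) : Prop :=
  exists q, List.In q Q /\ cq_eval A q tup.
Definition jucq_eval (A : gatom -> Prop) (J : jucq) (tup : seq gterm) : Prop :=
  exists nu : nat -> gterm, tup = map nu (j_ans J) /\
    forall p, List.In p (j_parts J) -> ucq_eval A p.2 (map nu p.1).

Definition catom_sat (I : interp) (nu : nat -> idom I) (a : catom) : Prop :=
  match a with
  | (PConcept n, [:: v]) => @iconc I n (nu v)
  | (PRole n, [:: v; w]) => @irole I n (nu v) (nu w)
  | _ => False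
  end.
Definition cq_holds (I : interp) (q : cq) (tup : seq gterm) : Prop :=
  exists nu : nat -> idom I, map nu (cq_ans q) = map (@iind I) tup /\
    forall a, List.In a (cq_body q) -> catom_sat nu a.
Definition individual (A : abox) (t : gterm) : Prop :=
  exists a, List.In a A /\ List.In t a.2.
Definition cert (q : cq) (T : tbox) (A : abox) (tup : seq gterm) : Prop :=
  size tup = size (cq_ans q) /\ (forall t, List.In t tup -> individual A t) /\
  forall I, is_model T A I -> cq_holds I q tup.

Definition perfect_rewriting_ucq (T : tbox) (q : cq) (Q : ucq) : Prop :=
  forall A : abox, abox_wf A -> forall tup,
    cert q T A tup <-> ucq_eval (fun a => List.In a A) Q tup.
Definition perfect_rewriting_jucq (T : tbox) (q : cq) (J : jucq) : Prop :=
  forall A : abox, abox_wf A -> forall tup,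
    cert q T A tup <-> jucq_eval (fun a => List.In a A) J tup.

Definition occurs (v : nat) (f : seq catom) : Prop :=
  exists a, List.In a f /\ v \in a.2.

Definition is_cover (q : cq) (C : seq (seq catom)) : Prop :=
  (forall f, List.In f C -> f <> [::] /\ forall a, List.In a f -> List.In a (cq_body q)) /\
  (forall a, List.In a (cq_body q) -> exists f, List.In f C /\ List.In a f) /\
  (forall i j, i < size C -> j < size C -> i <> j ->
     ~ List.incl (nth [::] C i) (nth [::] C j)).

(* xf lists (without repetition) the answer variables of q_|f *)
Definition frag_vars (q : cq) (C : seq (seq catom)) (i : nat) (xf : seq nat) : Prop :=
  uniq xf /\ forall v, v \in xf <->
    (occurs v (nth [::] C i) /\
     (v \in cq_ans q \/
      (v \notin cq_ans q /\ exists j, j < size C /\ j <> i /\ occurs v (nth [::] C j)))).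

Definition frag_query (q : cq) (C : seq (seq catom)) (xs : seq (seq nat)) (i : nat) : cq :=
  CQ (nth [::] xs i) (nth [::] C i).

(* q_C(x) <- /\_{f in C} q^ucq_|f (x_f) *)
Definition jucq_of (q : cq) (xs : seq (seq nat)) (Qs : seq ucq) : jucq :=
  JUCQ (cq_ans q) (zip xs Qs).

Definition cover_jucq_rewriting (T : tbox) (q : cq) (C : seq (seq catom))
    (xs : seq (seq nat)) (Qs : seq ucq) : Prop :=
  is_cover q C /\ size xs = size C /\ size Qs = size C /\
  (forall i, i < size C -> frag_vars q C i (nth [::] xs i)) /\
  (forall i, i < size C -> perfect_rewriting_ucq T (frag_query q C xs i) (nth [::] Qs i)) /\
  perfect_rewriting_jucq T q (jucq_of q xs Qs).

Record obda_spec := OBDASpec {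
  sT : tbox ;
  sM : seq mapping ;
  sSigma : schema ;
  svdefs : nat -> dquery }.

Definition mapping_wf (Sigma : schema) (vdefs : nat -> dquery) (m : mapping) : Prop :=
  exists v xs,
    msrc m = [:: (VBase v, map TVar xs)] /\ dquery_over Sigma (vdefs v) /\
    ((exists n, (mhead m).1 = PConcept n /\ size (mhead m).2 = 1) \/
     (exists n, (mhead m).1 = PRole n /\ size (mhead m).2 = 2)) /\
    all no_cst (mhead m).2 /\
    all (fun x => x \in xs) (flatten (map term_vars (mhead m).2)).

Definition obda_spec_wf (S : obda_spec) : Prop :=
  forall m, List.In m (sM S) -> mapping_wf (sSigma S) (svdefs S) m.

Definition is_M_translation (Sigma : schema) (vdefs : nat -> dquery) (M : seq mapping)
    (qt : view) (J : jucq) : Prop :=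
  forall D, instance_of Sigma D -> forall tup,
    vholds vdefs D qt tup <-> jucq_eval (virtual_abox vdefs D M) J tup.

Definition mvars (m : mapping) : seq nat :=
  flatten (map term_vars (mhead m).2) ++
  flatten [seq flatten (map term_vars a.2) | a <- msrc m].

Definition rename_mapping (r : nat -> nat) (m : mapping) : mapping :=
  Mapping ((mhead m).1, map (trename r) (mhead m).2)
          [seq (a.1, map (trename r) a.2) | a <- msrc m].

Definition cq_vars (q : cq) : seq nat := cq_ans q ++ flatten (map snd (cq_body q)).

Definition unif_pairs (q : cq) (rms : seq mapping) : seq (term * term) :=
  flatten [seq zip (map TVar p.1.2) (mhead p.2).2 | p <- zip (cq_body q) rms].

Definition unifier (s : nat -> term) (ps : seq (term * term)) : Prop :=
  forall p, List.In p ps -> tsubst s p.1 = tsubst s p.2.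
Definition mgu (s : nat -> term) (ps : seq (term * term)) : Prop :=
  unifier s ps /\
  forall th, unifier th ps -> exists tau, forall x, th x = tsubst tau (s x).

(* the rules q_unf(s(x)) <- V_1(s(z_1)), ..., V_n(s(z_n)), for every tuple of
   mappings (renamed apart) whose heads match the atoms of q and every mgu s *)
Definition produced (q : cq) (M : seq mapping) (r : vrule) : Prop :=
  exists (rms : seq mapping) (s : nat -> term),
    size rms = size (cq_body q) /\
    (forall i, i < size rms -> exists m (rho : nat -> nat),
        List.In m M /\ injective rho /\ nth dmap rms i = rename_mapping rho m) /\
    (forall i j, i < size rms -> j < size rms -> i <> j ->
        forall v, v \in mvars (nth dmap rms i) -> v \notin mvars (nth dmap rms j)) /\
    (forall i v, i < size rms -> v \in mvars (nth dmap rms i) -> v \notin cq_vars q) /\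
    (forall i, i < size rms ->
        (nth dcatom (cq_body q) i).1 = (mhead (nth dmap rms i)).1 /\
        size (nth dcatom (cq_body q) i).2 = size (mhead (nth dmap rms i)).2) /\
    mgu s (unif_pairs q rms) /\
    r = (map (tsubst s) (map TVar (cq_ans q)),
         flatten [seq [seq (a.1, map (tsubst s) a.2) | a <- msrc m] | m <- rms]).

Definition rename_rule (p : nat -> nat) (r : vrule) : vrule :=
  (map (trename p) r.1, [seq (a.1, map (trename p) a.2) | a <- r.2]).

Definition variant (r r' : vrule) : Prop :=
  exists p : nat -> nat, injective p /\ r' = rename_rule p r.

(* Pi is the (minimal, up to variable renaming) set of rules of unf(q, M) *)
Definition is_unf_cq (q : cq) (M : seq mapping) (Pi : seq vrule) : Prop :=
  (forall r, List.In r Pi -> produced q M r) /\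
  (forall r, produced q M r -> exists r', List.In r' Pi /\ variant r r').

Definition is_unf_ucq (Q : ucq) (M : seq mapping) (Pi : seq vrule) : Prop :=
  (forall r, List.In r Pi -> exists q, List.In q Q /\ produced q M r) /\
  (forall q r, List.In q Q -> produced q M r -> exists r', List.In r' Pi /\ variant r r').

(* M^aux = { Aux_f(x_f) <~ U_f(x_f) },  U_f the view for unf(q^ucq_|f, M) *)
Definition aux_mappings (xs : seq (seq nat)) (PiF : seq (seq vrule)) : seq mapping :=
  [seq Mapping (PAux i, map TVar (nth [::] xs i))
               [:: (VDef (nth [::] PiF i), map TVar (nth [::] xs i))]
  | i <- iota 0 (size xs)].

(* q^aux_C(x) <- /\_f Aux_f(x_f) *)
Definition aux_query (q : cq) (xs : seq (seq nat)) : cq :=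
  CQ (cq_ans q) [seq (PAux i, nth [::] xs i) | i <- iota 0 (size xs)].

Definition split_mapping (m : mapping) : seq mapping :=
  match msrc m with
  | [:: (VDef rules, args)] =>
      match vars_only (mhead m).2, vars_only args with
      | Some xs, Some ys =>
          if (xs == ys) && uniq xs
          then [seq Mapping ((mhead m).1, r.1) r.2 | r <- rules]
          else [:: m]
      | _, _ => [:: m]
      end
  | _ => [:: m]
  end.

Definition split_all (M : seq mapping) : seq mapping := flatten (map split_mapping M).

(* same signature (L, f) *)
Definition sig_eqb (m1 m2 : mapping) : bool :=
  pname_eqb (mhead m1).1 (mhead m2).1 &&
  terms_eqb (map shape (mhead m1).2) (map shape (mhead m2).2).

Fixpoint sig_reps (seen : seq mapping) (M : seq mapping) : seq mapping :=
  match M with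
  | [::] => [::]
  | m :: M' => if has (sig_eqb m) seen then sig_reps seen M'
               else m :: sig_reps (m :: seen) M'
  end.

Definition head_leaves (m : mapping) : seq nat := flatten (map term_vars (mhead m).2).

(* L(f(v)) <~ W(v),  W(v) given by { W(v_i) <- V_i(v_i) } *)
Definition wrap_group (M : seq mapping) (m0 : mapping) : mapping :=
  let grp := filter (sig_eqb m0) M in
  let W := VDef [seq (map TVar (head_leaves m), msrc m) | m <- grp] in
  let k := size (head_leaves m0) in
  Mapping ((mhead m0).1, (relabel_seq (mhead m0).2 0).1) [:: (W, map TVar (iota 0 k))].

Definition wrap (M : seq mapping) : seq mapping := map (wrap_group M) (sig_reps [::] M).

(* Pi is (the rule set of) unf_opt(q_C, M) = unf(q^aux_C, wrap(split(M^aux))) *)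
Definition is_unf_opt (M : seq mapping) (q : cq) (xs : seq (seq nat)) (Qs : seq ucq)
    (Pi : seq vrule) : Prop :=
  exists PiF : seq (seq vrule),
    size PiF = size xs /\
    (forall i, i < size xs -> is_unf_ucq (nth [::] Qs i) M (nth [::] PiF i)) /\
    is_unf_cq (aux_query q xs) (wrap (split_all (aux_mappings xs PiF))) Pi.

From Pilot Require Import Defs.
From HB Require Import structures.
From mathcomp Require Import all_boot zify.
From Stdlib Require Import ClassicalEpsilon.
Set Implicit Arguments. Unset Strict Implicit. Unset Printing Implicit Defensive.

(* Unfolding is sound and complete with respect to the virtual ABox: a rule of
   unf(q, M) fires on D exactly when q matches A_(M,D).  For completeness, take
   for each atom of a match the mapping instance producing its fact, rename these
   mappings apart and glue their valuations into one unifier of the head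
   equations; it factors through a most general unifier, which exists by the
   usual unification algorithm.  Neither split (which distributes the rules of
   U_f over mappings with the same head Aux_f(x_f), possible because x_f has no
   repetitions) nor wrap (which gathers the mappings of one signature (L, f)
   under a single view feeding the renumbered leaves of f) changes the virtual
   ABox.  So the Aux_f-facts of the virtual ABox of wrap(split(M^aux)) are the
   answers of q^ucq_|f over A_(M,D), and evaluating q^aux_C over it is
   evaluating q_C over A_(M,D). *)

Section ListIn.
Variables A B : Type.

Lemma In_map (f : A -> B) (l : seq A) y :
  List.In y (map f l) <-> exists x, List.In x l /\ y = f x.
Proof.
rewrite List.in_map_iff; split=> -[x [H1 H2]]; exists x; split=> //; exact: esym.
Qed.

Lemma In_flatten (ss : seq (seq A)) x :
  List.In x (flatten ss) <-> exists s, List.In s ss /\ List.In x s.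
Proof.
by rewrite -[flatten ss]/(List.concat ss) List.in_concat; split=> -[s []]; exists s.
Qed.

Lemma In_filter (p : pred A) (l : seq A) x : List.In x (filter p l) <-> List.In x l /\ p x.
Proof. exact: List.filter_In. Qed.

Lemma In_cat (l1 l2 : seq A) x : List.In x (l1 ++ l2) <-> List.In x l1 \/ List.In x l2.
Proof. exact: List.in_app_iff. Qed.

Lemma In_ex_nth (x0 : A) (l : seq A) x : List.In x l -> exists2 i, i < size l & x = nth x0 l i.
Proof. by elim: l => //= a l IH [<-|/IH [i]]; [exists 0 | exists i.+1]. Qed.

Lemma nth_In (x0 : A) (l : seq A) i : i < size l -> List.In (nth x0 l i) l.
Proof. by elim: l i => //= a l IH [|i] /= Hi; [left | right; exact: IH]. Qed.

Lemma In_zip (ss : seq A) (ts : seq B) p :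
  List.In p (zip ss ts) -> List.In p.1 ss /\ List.In p.2 ts.
Proof.
elim: ss ts => [|a ss IH] [|b ts] //= [<-|/IH]; [by split; left | by case; split; right].
Qed.

Lemma eq_map_In (f g : A -> B) (l : seq A) :
  (forall x, List.In x l -> f x = g x) -> map f l = map g l.
Proof. by elim: l => //= a l IH H; rewrite H ?IH //; [move=> x Hx; apply: H; right | left]. Qed.

Lemma eq_map_zip (f : A -> B) (l1 l2 : seq A) : size l1 = size l2 ->
  (forall p, List.In p (zip l1 l2) -> f p.1 = f p.2) <-> map f l1 = map f l2.
Proof.
elim: l1 l2 => [|a l1 IH] [|b l2] //= [/IH {}IH]; split.
- by move=> H; rewrite (H (a, b)) ?(proj1 IH) //; [move=> p Hp; apply: H; right | left].
- by case=> Hab /(proj2 IH) H p [<-|/H].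
Qed.

Lemma mem_flatten_map (f : A -> seq nat) (l : seq A) y :
  y \in flatten (map f l) <-> exists a, List.In a l /\ y \in f a.
Proof.
elim: l => [|a l IH] /=; first by split=> [|[a []]].
rewrite mem_cat; split.
- case/orP=> [Hy|/IH [b [Hb Hy]]]; first by exists a; split; [left|].
  by exists b; split; [right|].
- by case=> b [[<-|Hb] Hy]; apply/orP; [left | right; apply/IH; exists b].
Qed.

Lemma In_sumn_le (f : A -> nat) u l : List.In u l -> f u <= sumn (map f l).
Proof.
by elim: l => //= a l IH [<-|/IH]; [apply: leq_addr | move/leq_trans; apply; apply: leq_addl].
Qed.

End ListIn.

Lemma In_iota m n i : List.In i (iota m n) <-> m <= i < m + n.
Proof. by rewrite -[iota m n]/(List.seq m n) List.in_seq; split=> ?; lia. Qed.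

Lemma In_mem (T : eqType) (x : T) (l : seq T) : List.In x l -> x \in l.
Proof. by elim: l => //= a l IH [->|/IH]; rewrite inE ?eqxx // => ->; rewrite orbT. Qed.

(** * Terms and substitutions *)

Section TermInduction.
Variable P : term -> Prop.
Hypotheses (PVar : forall x, P (TVar x)) (PCst : forall c, P (TCst c))
  (PFn : forall f ts, (forall t, List.In t ts -> P t) -> P (TFn f ts)).

Fixpoint term_nested_ind (t : term) : P t :=
  match t with
  | TVar x => PVar x
  | TCst c => PCst c
  | TFn f ts => PFn f ((fix go (l : seq term) : forall u, List.In u l -> P u :=
        match l with
        | [::] => fun u (H : List.In u [::]) => match H with end
        | a :: l' => fun u H => match H with
                      | or_introl e => eq_ind a P (term_nested_ind a) u e
                      | or_intror H' => go l' u H' end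
        end) ts)
  end.
End TermInduction.

Section GtermInduction.
Variable P : gterm -> Prop.
Hypotheses (PCst : forall c, P (GC c))
  (PFn : forall f ts, (forall t, List.In t ts -> P t) -> P (GF f ts)).

Fixpoint gterm_nested_ind (t : gterm) : P t :=
  match t with
  | GC c => PCst c
  | GF f ts => PFn f ((fix go (l : seq gterm) : forall u, List.In u l -> P u :=
        match l with
        | [::] => fun u (H : List.In u [::]) => match H with end
        | a :: l' => fun u H => match H with
                      | or_introl e => eq_ind a P (gterm_nested_ind a) u e
                      | or_intror H' => go l' u H' end
        end) ts)
  end.
End GtermInduction.

Lemma term_vars_TFn f ts x :
  x \in term_vars (TFn f ts) <-> exists u, List.In u ts /\ x \in term_vars u.
Proof. exact: mem_flatten_map. Qed.

Lemma eq_tsubst s1 s2 t :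
  (forall x, x \in term_vars t -> s1 x = s2 x) -> tsubst s1 t = tsubst s2 t.
Proof.
elim/term_nested_ind: t => [x H|//|f ts IH H] /=; first by apply: H; rewrite inE.
by congr TFn; apply: eq_map_In => u Hu; apply: IH => // x Hx; apply/H/term_vars_TFn; exists u.
Qed.

Lemma eq_gsubst s1 s2 t :
  (forall x, x \in term_vars t -> s1 x = s2 x) -> gsubst s1 t = gsubst s2 t.
Proof.
elim/term_nested_ind: t => [x H|//|f ts IH H] /=; first by apply: H; rewrite inE.
by congr GF; apply: eq_map_In => u Hu; apply: IH => // x Hx; apply/H/term_vars_TFn; exists u.
Qed.

Lemma tsubstA a b t : tsubst a (tsubst b t) = tsubst (fun x => tsubst a (b x)) t.
Proof.
by elim/term_nested_ind: t => [//|//|f ts IH] /=; congr TFn; rewrite -map_comp; apply: eq_map_In.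
Qed.

Lemma tsubst_trename s r t : tsubst s (trename r t) = tsubst (fun x => s (r x)) t.
Proof.
by elim/term_nested_ind: t => [//|//|f ts IH] /=; congr TFn; rewrite -map_comp; apply: eq_map_In.
Qed.

Lemma gsubst_tsubst g s t : gsubst g (tsubst s t) = gsubst (fun x => gsubst g (s x)) t.
Proof.
by elim/term_nested_ind: t => [//|//|f ts IH] /=; congr GF; rewrite -map_comp; apply: eq_map_In.
Qed.

Lemma gsubst_trename g r t : gsubst g (trename r t) = gsubst (fun x => g (r x)) t.
Proof.
by elim/term_nested_ind: t => [//|//|f ts IH] /=; congr GF; rewrite -map_comp; apply: eq_map_In.
Qed.

Lemma tsubst_TVar t : tsubst TVar t = t.
Proof.
elim/term_nested_ind: t => [//|//|f ts IH] /=.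
by congr TFn; rewrite -[RHS]map_id; apply: eq_map_In.
Qed.

Lemma term_vars_trename r t : term_vars (trename r t) = map r (term_vars t).
Proof.
elim/term_nested_ind: t => [//|//|f ts IH] /=.
by rewrite map_flatten -!map_comp; congr flatten; apply: eq_map_In.
Qed.

Lemma term_vars_tsubst s u y :
  y \in term_vars (tsubst s u) -> exists2 z, z \in term_vars u & y \in term_vars (s z).
Proof.
elim/term_nested_ind: u => [x|//|f ts IH] /=; first by exists x; rewrite ?inE.
case/mem_flatten_map=> _ [/In_map [u [Hu ->]] Hy].
case: (IH _ Hu Hy) => z Hz Hyz; exists z => //.
by apply/mem_flatten_map; exists u.
Qed.

(* Ground valuations are compared with term substitutions through this
   embedding; its left inverse sends variables to the junk constant [GC 0]. *)
Fixpoint term_of_gterm (g : gterm) : term :=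
  match g with GC c => TCst c | GF f gs => TFn f (map term_of_gterm gs) end.

Fixpoint gterm_of_term (t : term) : gterm :=
  match t with TVar _ => GC 0 | TCst c => GC c | TFn f ts => GF f (map gterm_of_term ts) end.

Lemma term_of_gtermK : cancel term_of_gterm gterm_of_term.
Proof.
elim/gterm_nested_ind=> [//|f gs IH] /=.
by congr GF; rewrite -map_comp -[RHS]map_id; apply: eq_map_In.
Qed.

Lemma tsubst_term_of_gterm g t :
  tsubst (fun x => term_of_gterm (g x)) t = term_of_gterm (gsubst g t).
Proof.
by elim/term_nested_ind: t => [//|//|f ts IH] /=; congr TFn; rewrite -map_comp; apply: eq_map_In.
Qed.

Lemma gterm_of_term_tsubst s t :
  gterm_of_term (tsubst s t) = gsubst (fun x => gterm_of_term (s x)) t.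
Proof.
by elim/term_nested_ind: t => [//|//|f ts IH] /=; congr GF; rewrite -map_comp; apply: eq_map_In.
Qed.

Lemma term_eqbP : Equality.axiom term_eqb.
Proof.
suff E s t : term_eqb s t <-> s = t by move=> s t; apply: (iffP idP) => /E.
elim/term_nested_ind: s t => [x|c|f ss IH] [y|d|g ts] /=; try by split.
- by split=> [/eqP ->|[->]].
- by split=> [/eqP ->|[->]].
change ((f == g) && terms_eqb ss ts <-> TFn f ss = TFn g ts).
have terms_eqbE : terms_eqb ss ts <-> ss = ts.
  elim: ss ts IH => [|s1 ss IHss] [|t1 ts] IH /=; try by split.
  have /IHss {}IHss : forall u, List.In u ss -> forall t, term_eqb u t <-> u = t.
    by move=> u Hu; apply: IH; right.
  have IH1 := IH _ (or_introl erefl).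
  by split=> [/andP [/IH1 -> /IHss ->] //|[<- <-]]; apply/andP; split; [apply/IH1 | apply/IHss].
by split=> [/andP [/eqP -> /terms_eqbE ->] //|[-> E]]; rewrite eqxx /=; apply/terms_eqbE.
Qed.

HB.instance Definition _ := hasDecEq.Build term term_eqbP.

Lemma terms_eqbE ss ts : terms_eqb ss ts = (ss == ts).
Proof. by elim: ss ts => [|s ss IH] [|t ts] //=; rewrite IH. Qed.

(** * Most general unifiers *)

Fixpoint tsize (t : term) : nat :=
  match t with TFn _ ts => (sumn (map tsize ts)).+1 | _ => 1 end.

Definition psubst (s : nat -> term) (ps : seq (term * term)) : seq (term * term) :=
  [seq (tsubst s p.1, tsubst s p.2) | p <- ps].
Definition psize (ps : seq (term * term)) : nat := sumn [seq tsize p.1 + tsize p.2 | p <- ps].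
Definition pvars (ps : seq (term * term)) : seq nat :=
  flatten [seq term_vars p.1 ++ term_vars p.2 | p <- ps].
Definition nvars (ps : seq (term * term)) : nat := size (undup (pvars ps)).
Definition unifiable (ps : seq (term * term)) : Prop := exists th, unifier th ps.

Definition subst1 (x : nat) (t : term) : nat -> term :=
  fun y => if y == x then t else TVar y.

Lemma tsize_gt0 t : 0 < tsize t. Proof. by case: t. Qed.

Lemma tsize_tsubst_var th x t : x \in term_vars t -> tsize (th x) <= tsize (tsubst th t).
Proof.
elim/term_nested_ind: t => [y|//|f ts IH] /=; first by rewrite inE => /eqP ->.
case/mem_flatten_map=> u [Hu Hx]; apply: leq_trans (IH _ Hu Hx) _.
by rewrite -map_comp; apply/leqW/(In_sumn_le (fun u => tsize (tsubst th u))).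
Qed.

Lemma unifier_occurs_check th x t :
  th x = tsubst th t -> t != TVar x -> x \notin term_vars t.
Proof.
case: t => [y|//|f ts] /= Hth; first by rewrite inE; apply: contra => /eqP ->.
move=> _; apply/negP => /mem_flatten_map [u [Hu Hx]].
have := tsize_tsubst_var th Hx; apply/negP; rewrite -ltnNge Hth /= ltnS -map_comp.
exact: (In_sumn_le (fun u => tsize (tsubst th u)) Hu).
Qed.

Lemma unifier_cons th p ps :
  unifier th (p :: ps) <-> tsubst th p.1 = tsubst th p.2 /\ unifier th ps.
Proof.
split=> [H|[H1 H2] q [<-|/H2] //].
by split=> [|q Hq]; apply: H; [left | right].
Qed.

Lemma eq_unifier th th' ps : th =1 th' -> unifier th ps -> unifier th' ps.
Proof. by move=> E H p /H; rewrite !(@eq_tsubst th th'). Qed.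

Lemma unifier_psubst th s ps :
  unifier th (psubst s ps) <-> unifier (fun x => tsubst th (s x)) ps.
Proof.
split=> H p Hp.
- by rewrite -!tsubstA; apply: (H (_, _)); apply/In_map; exists p.
- by case/In_map: Hp => p' [Hp' ->] /=; rewrite !tsubstA; apply: H.
Qed.

Lemma mgu_eq_unifiers s ps ps' :
  (forall th, unifier th ps <-> unifier th ps') -> mgu s ps -> mgu s ps'.
Proof. by move=> E [H1 H2]; split=> [|th /E]; [apply/E | apply: H2]. Qed.

Lemma mgu_nil : mgu TVar [::].
Proof. by split=> [p []|th _]; exists th. Qed.

Lemma mgu_drop s t ps : mgu s ps -> mgu s ((t, t) :: ps).
Proof. by apply: mgu_eq_unifiers => th; rewrite unifier_cons; split=> [|[]]. Qed.

Lemma mgu_swap s t1 t2 ps : mgu s ((t2, t1) :: ps) -> mgu s ((t1, t2) :: ps).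
Proof. by apply: mgu_eq_unifiers => th; rewrite !unifier_cons /=; split=> -[]. Qed.

Lemma subst1_unifier th x t y : th x = tsubst th t -> tsubst th (subst1 x t y) = th y.
Proof. by rewrite /subst1; case: eqP => [->|]. Qed.

Lemma tsubst_subst1_notin x t u : x \notin term_vars u -> tsubst (subst1 x t) u = u.
Proof.
move=> Hx; rewrite -[RHS]tsubst_TVar; apply: eq_tsubst => y Hy; rewrite /subst1.
by case: eqP => // E; rewrite -E Hy in Hx.
Qed.

Lemma mgu_subst1 x t ps s : x \notin term_vars t ->
  mgu s (psubst (subst1 x t) ps) -> mgu (fun y => tsubst s (subst1 x t y)) ((TVar x, t) :: ps).
Proof.
move=> Hx [Us Gs]; split.
- apply/unifier_cons; split; last exact/unifier_psubst.
  by rewrite /= /subst1 eqxx -tsubstA tsubst_subst1_notin.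
- move=> th /unifier_cons [/= Hth Hps].
  have Eth : (fun y => tsubst th (subst1 x t y)) =1 th by move=> y; apply: subst1_unifier.
  have [tau Htau] := Gs th (proj2 (unifier_psubst _ _ _) (eq_unifier (fsym Eth) Hps)).
  exists tau => y; rewrite tsubstA -Eth; apply: eq_tsubst => z _; exact: Htau.
Qed.

Lemma psize_cons t1 t2 ps : psize ((t1, t2) :: ps) = tsize t1 + tsize t2 + psize ps.
Proof. by []. Qed.

Lemma psize_cat ps ps' : psize (ps ++ ps') = psize ps + psize ps'.
Proof. by rewrite /psize map_cat sumn_cat. Qed.

Lemma pvars_cons t1 t2 ps : pvars ((t1, t2) :: ps) = (term_vars t1 ++ term_vars t2) ++ pvars ps.
Proof. by []. Qed.

Lemma nvars_sub ps ps' : {subset pvars ps <= pvars ps'} -> nvars ps <= nvars ps'.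
Proof.
move=> H; apply: uniq_leq_size; first exact: undup_uniq.
by move=> y; rewrite !mem_undup; apply: H.
Qed.

Lemma nvars_sub_lt x ps ps' : {subset pvars ps <= pvars ps'} ->
  x \in pvars ps' -> x \notin pvars ps -> nvars ps < nvars ps'.
Proof.
move=> H Hx Hn; apply: (uniq_leq_size (s1 := x :: undup (pvars ps))).
  by rewrite /= mem_undup Hn undup_uniq.
by move=> y; rewrite inE !mem_undup => /orP [/eqP ->|/H].
Qed.

Lemma pvars_psubst1 x t ps y : y \in pvars (psubst (subst1 x t) ps) ->
  (y \in term_vars t) || (y \in pvars ps) && (y != x).
Proof.
case/mem_flatten_map=> _ [/In_map [p [Hp ->]]] /=.
have Hp' : forall z, z \in term_vars p.1 ++ term_vars p.2 -> z \in pvars ps.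
  by move=> z Hz; apply/mem_flatten_map; exists p.
rewrite mem_cat => /orP [] /term_vars_tsubst [z Hz]; rewrite /subst1;
  case: eqP => [_ -> //|/eqP ne]; rewrite inE => /eqP ->;
  by rewrite ne Hp' ?orbT // mem_cat Hz ?orbT.
Qed.

Lemma nvars_psubst1_lt x t ps : x \notin term_vars t ->
  nvars (psubst (subst1 x t) ps) < nvars ((TVar x, t) :: ps).
Proof.
move=> Hx; apply: (@nvars_sub_lt x).
- move=> y /pvars_psubst1 /orP [Hy|/andP [Hy _]]; rewrite pvars_cons !mem_cat Hy ?orbT //.
- by rewrite pvars_cons !mem_cat inE eqxx.
- by apply/negP => /pvars_psubst1; rewrite (negbTE Hx) eqxx andbF.
Qed.

Lemma pvars_zip ss ts :
  {subset pvars (zip ss ts) <= flatten (map term_vars ss) ++ flatten (map term_vars ts)}.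
Proof.
move=> y /mem_flatten_map [p [/In_zip [H1 H2]]]; rewrite !mem_cat => /orP [Hy|Hy].
- by apply/orP; left; apply/mem_flatten_map; exists p.1.
- by apply/orP; right; apply/mem_flatten_map; exists p.2.
Qed.

Lemma psize_zip ss ts : size ss = size ts ->
  psize (zip ss ts) = sumn (map tsize ss) + sumn (map tsize ts).
Proof.
elim: ss ts => [|a ss IH] [|b ts] //= [/IH {}IH]; rewrite /psize /= -/(psize _) IH.
by rewrite -!addnA; congr addn; rewrite addnCA.
Qed.

Lemma unifier_decompose th f ss ts ps : size ss = size ts ->
  unifier th (zip ss ts ++ ps) <-> unifier th ((TFn f ss, TFn f ts) :: ps).
Proof.
move=> Hsz; rewrite unifier_cons /=; split.
- move=> H; split=> [|p Hp]; last by apply: H; apply/In_cat; right.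
  by congr TFn; apply/(eq_map_zip _ Hsz) => p Hp; apply: H; apply/In_cat; left.
- by case=> -[/(eq_map_zip _ Hsz) Hz] Hps p /In_cat [/Hz|/Hps].
Qed.

(* Robinson's algorithm terminates by induction on the number of variables, then
   on the size: eliminating a variable lowers the former, other steps the latter. *)
Section MguExistence.
Variable n : nat.
Hypothesis IHn : forall ps, nvars ps < n -> unifiable ps -> exists s, mgu s ps.

Lemma mgu_exists_var x t ps : unifiable ((TVar x, t) :: ps) -> t != TVar x ->
  nvars ((TVar x, t) :: ps) <= n -> exists s, mgu s ((TVar x, t) :: ps).
Proof.
case=> th /unifier_cons [/= Hth Hps] Ht Hn.
have Hocc := unifier_occurs_check Hth Ht.
have [s Hs] : exists s, mgu s (psubst (subst1 x t) ps).
  apply: IHn; first exact: leq_trans (nvars_psubst1_lt ps Hocc) Hn.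
  exists th; apply/unifier_psubst; apply: eq_unifier Hps => y.
  by rewrite subst1_unifier.
by exists (fun y => tsubst s (subst1 x t y)); apply: mgu_subst1.
Qed.

Lemma mgu_exists_var_swap y t ps : unifiable ((t, TVar y) :: ps) -> t != TVar y ->
  nvars ((t, TVar y) :: ps) <= n -> exists s, mgu s ((t, TVar y) :: ps).
Proof.
case=> th /unifier_cons [Hth Hps] Ht Hn.
have [|//||s Hs] := @mgu_exists_var y t ps; last by exists s; apply: mgu_swap.
  by exists th; apply/unifier_cons.
apply: leq_trans Hn; apply: nvars_sub => z; rewrite !pvars_cons !mem_cat.
by case/orP=> [/orP []|] ->; rewrite ?orbT.
Qed.

Lemma mgu_exists_bounded m ps : psize ps <= m -> nvars ps <= n ->
  unifiable ps -> exists s, mgu s ps.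
Proof.
elim: m ps => [|m IHm] [|[t1 t2] ps] Hm Hn Hu; try by exists TVar; apply: mgu_nil.
  by move: Hm; rewrite psize_cons; have := tsize_gt0 t1; lia.
have [th /unifier_cons [/= Ht Hps]] := Hu.
have [s Hs] : exists s, mgu s ps.
  apply: IHm; last by exists th.
    by move: Hm; rewrite psize_cons; have := tsize_gt0 t1; lia.
  by apply: leq_trans Hn; apply: nvars_sub => y Hy; rewrite pvars_cons mem_cat Hy orbT.
case: t1 => [x|c|f ss] in Ht Hm Hn Hu *.
- have [->|ne] := eqVneq t2 (TVar x); first by exists s; apply: mgu_drop.
  exact: mgu_exists_var.
- case: t2 => [y|d|g ts] in Ht Hm Hn Hu *; [exact: mgu_exists_var_swap | | by []].
  by case: Ht => ->; exists s; apply: mgu_drop.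
case: t2 => [y|d|g ts] in Ht Hm Hn Hu *; [exact: mgu_exists_var_swap | by [] |].
case: Ht => <- Hmap.
have Hsz : size ss = size ts by rewrite -(size_map (tsubst th) ss) Hmap size_map.
have [s' Hs'] : exists s', mgu s' (zip ss ts ++ ps).
  apply: IHm.
  - by move: Hm; rewrite psize_cat psize_zip // psize_cons /=; lia.
  - apply: leq_trans Hn; apply: nvars_sub => z.
    rewrite /pvars map_cat flatten_cat -!/(pvars _) pvars_cons !mem_cat /=.
    case/orP=> [/pvars_zip|->]; last by rewrite orbT.
    by rewrite mem_cat => /orP [] ->; rewrite ?orbT.
  - by exists th; apply/(unifier_decompose th f ps Hsz)/unifier_cons; rewrite /= Hmap.
by exists s'; apply: mgu_eq_unifiers Hs' => th'; apply: unifier_decompose.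
Qed.

End MguExistence.

Lemma mgu_exists ps : unifiable ps -> exists s, mgu s ps.
Proof.
suff H : forall n ps, nvars ps < n -> unifiable ps -> exists s, mgu s ps by apply: H (ltnSn _).
by elim=> // n IHn ps'; rewrite ltnS; exact: (mgu_exists_bounded IHn (leqnn (psize ps'))).
Qed.

(** * Correctness of unfolding *)

Lemma mvars_rename r m : mvars (rename_mapping r m) = map r (mvars m).
Proof.
rewrite /mvars /rename_mapping /= map_cat map_flatten -map_comp; congr cat.
- by congr flatten; rewrite -map_comp; apply: eq_map_In => t _; apply: term_vars_trename.
- rewrite map_flatten -!map_comp; congr flatten; apply: eq_map_In => a _ /=.
  rewrite map_flatten -!map_comp; congr flatten.
  by apply: eq_map_In => t _; apply: term_vars_trename.
Qed.

Lemma unifier_unif_pairs s q rms : size rms = size (cq_body q) ->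
  (forall i, i < size rms ->
     size (nth dcatom (cq_body q) i).2 = size (mhead (nth dmap rms i)).2) ->
  unifier s (unif_pairs q rms) <->
  forall i, i < size rms -> map (tsubst s) (map TVar (nth dcatom (cq_body q) i).2) =
                            map (tsubst s) (mhead (nth dmap rms i)).2.
Proof.
move=> Hsz Hsz2; split.
- move=> U i Hi; apply/eq_map_zip => [|p Hp]; first by rewrite size_map Hsz2.
  apply: U; apply/In_flatten; eexists; split; last exact: Hp.
  apply/In_map; exists (nth dcatom (cq_body q) i, nth dmap rms i); split=> //.
  by rewrite -nth_zip ?Hsz //; apply: nth_In; rewrite size_zip Hsz minnn -Hsz.
- move=> H p /In_flatten [l [/In_map [pp [Hpp ->]] Hp]].
  have [j Hj Epp] := In_ex_nth (dcatom, dmap) Hpp; rewrite size_zip Hsz minnn -Hsz in Hj.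
  rewrite Epp nth_zip ?Hsz // in Hp.
  by apply: (proj2 (eq_map_zip _ _)) (H j Hj) p Hp; rewrite size_map Hsz2.
Qed.

(* Numbers the variables of [n] copies apart from each other and from all
   variables below [B]. *)
Definition apart (B n i y : nat) : nat := B + (y * n + i).

Lemma apartK B n i y : i < n -> (apart B n i y - B) %% n = i /\ (apart B n i y - B) %/ n = y.
Proof.
move=> Hi; have Hn : 0 < n by apply: leq_ltn_trans Hi.
by rewrite /apart addKn modnMDl modn_small // divnMDl // divn_small // addn0.
Qed.

Lemma apart_inj B n i j y y' : i < n -> j < n ->
  apart B n i y = apart B n j y' -> i = j /\ y = y'.
Proof. by move=> Hi Hj E; have := apartK B y Hi; rewrite E; case: (apartK B y' Hj) => -> -> []. Qed.

Section Unfolding.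
Variables (vdefs : nat -> dquery) (D : instance).

Definition body_holds (body : seq vatom) (g : nat -> gterm) : Prop :=
  forall b, List.In b body -> vholds vdefs D b.1 (map (gsubst g) b.2).

Lemma vholds_VDef rules tup : vholds vdefs D (VDef rules) tup <->
  exists r g, List.In r rules /\ body_holds r.2 g /\ tup = map (gsubst g) r.1.
Proof.
split=> [H|[r [g [Hr [Hb ->]]]]]; last exact: vh_def.
by inversion H; subst; exists r, s.
Qed.

Lemma produced_sound q M r g : produced q M r -> body_holds r.2 g ->
  cq_eval (virtual_abox vdefs D M) q (map (gsubst g) r.1).
Proof.
case=> rms [s [Hsz [Hren [_ [_ [Hhd [[Us _] ->]]]]]]] Hr /=.
exists (fun x => gsubst g (s x)); split; first by rewrite -!map_comp.
have Hsz2 i : i < size rms ->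
    size (nth dcatom (cq_body q) i).2 = size (mhead (nth dmap rms i)).2 by case/Hhd.
have Hs := proj1 (unifier_unif_pairs s Hsz Hsz2) Us.
move=> a Ha; have [i Hi Ea] := In_ex_nth dcatom Ha; rewrite -Hsz in Hi.
have [m [rho [Hm [_ Erm]]]] := Hren i Hi.
exists m, (fun y => gsubst g (s (rho y))); split=> //; split.
- move=> b Hb.
  have Hb' : List.In (b.1, map (tsubst s) (map (trename rho) b.2))
      (flatten [seq [seq (a.1, map (tsubst s) a.2) | a <- msrc m] | m <- rms]).
    apply/In_flatten; eexists; split.
      by apply/In_map; exists (nth dmap rms i); split; [apply: nth_In|].
    apply/In_map; exists (b.1, map (trename rho) b.2); rewrite Erm; split=> //.
    by apply/In_map; exists b.
  move: (Hr _ Hb'); rewrite /= -!map_comp; congr vholds; apply: eq_map_In => t _ /=.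
  by rewrite gsubst_tsubst gsubst_trename.
- have [HL _] := Hhd i Hi; rewrite Ea HL Erm; congr pair.
  have := congr1 (map (gsubst g)) (Hs i Hi); rewrite Erm -!map_comp => ->.
  by apply: eq_map_In => t _ /=; rewrite gsubst_tsubst gsubst_trename.
Qed.

Definition atom_match M (nu : nat -> gterm) (a : catom) (mg : mapping * (nat -> gterm)) :
    Prop :=
  [/\ List.In mg.1 M, body_holds (msrc mg.1) mg.2 &
      (a.1, map nu a.2) = ((mhead mg.1).1, map (gsubst mg.2) (mhead mg.1).2)].

Section Completeness.
Variables (q : cq) (M : seq mapping) (nu : nat -> gterm).
Variable pick : nat -> mapping * (nat -> gterm).
Hypothesis pick_match :
  forall i, i < size (cq_body q) -> atom_match M nu (nth dcatom (cq_body q) i) (pick i).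

Let n := size (cq_body q).
(* The renamed copies live above every variable of [q], as [produced] demands. *)
Let B := (\max_(x <- cq_vars q) x).+1.
Let rho := apart B n.

Lemma cq_vars_lt x : x \in cq_vars q -> x < B.
Proof. by move=> Hx; rewrite ltnS (leq_bigmax_seq (F := id) _ Hx). Qed.

Definition renamed_picks : seq mapping :=
  [seq rename_mapping (rho i) (pick i).1 | i <- iota 0 n].

Lemma size_renamed_picks : size renamed_picks = n.
Proof. by rewrite size_map size_iota. Qed.

Lemma nth_renamed_picks i :
  i < n -> nth dmap renamed_picks i = rename_mapping (rho i) (pick i).1.
Proof. by move=> Hi; rewrite (nth_map 0) ?size_iota // nth_iota. Qed.

Definition glued_unifier (v : nat) : term :=
  if v < B then term_of_gterm (nu v)
  else term_of_gterm ((pick ((v - B) %% n)).2 ((v - B) %/ n)).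

Lemma glued_unifier_query x : x \in cq_vars q -> glued_unifier x = term_of_gterm (nu x).
Proof. by move=> /cq_vars_lt Hx; rewrite /glued_unifier Hx. Qed.

Lemma glued_unifier_renamed i y :
  i < n -> glued_unifier (rho i y) = term_of_gterm ((pick i).2 y).
Proof.
move=> Hi; rewrite /glued_unifier /rho; case: (apartK B y Hi) => -> ->.
by rewrite ifF // /apart ltnNge leq_addr.
Qed.

Lemma renamed_picks_arity i : i < size renamed_picks ->
  size (nth dcatom (cq_body q) i).2 = size (mhead (nth dmap renamed_picks i)).2.
Proof.
rewrite size_renamed_picks => Hi; have [_ _ [_ E]] := pick_match Hi.
by rewrite nth_renamed_picks //= size_map -(size_map nu) E size_map.
Qed.

Lemma glued_unifier_unifies : unifier glued_unifier (unif_pairs q renamed_picks).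
Proof.
apply/(unifier_unif_pairs _ size_renamed_picks renamed_picks_arity) => i.
rewrite size_renamed_picks => Hi; have [_ _ [_ E]] := pick_match Hi.
rewrite nth_renamed_picks //= -!map_comp.
rewrite (eq_map_In (g := fun x => term_of_gterm (nu x))); last first.
  move=> x Hx /=; apply: glued_unifier_query; rewrite mem_cat; apply/orP; right.
  apply/mem_flatten_map; exists (nth dcatom (cq_body q) i).
  by split; [apply: nth_In | apply: In_mem].
rewrite (map_comp term_of_gterm nu) E -map_comp; apply: eq_map_In => t _ /=.
rewrite tsubst_trename -tsubst_term_of_gterm; apply: eq_tsubst => x _.
by rewrite glued_unifier_renamed.
Qed.

Definition unfolded_rule (s : nat -> term) : vrule :=
  (map (tsubst s) (map TVar (cq_ans q)),
   flatten [seq [seq (a.1, map (tsubst s) a.2) | a <- msrc m] | m <- renamed_picks]).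

Lemma produced_unfolded_rule s :
  mgu s (unif_pairs q renamed_picks) -> produced q M (unfolded_rule s).
Proof.
move=> Hs; exists renamed_picks, s; split; first exact: size_renamed_picks.
rewrite size_renamed_picks; split; [|split; [|split; [|split]]] => //.
- move=> i Hi; have [Hm _ _] := pick_match Hi.
  exists (pick i).1, (rho i); split=> //; split; last exact: nth_renamed_picks.
  by move=> y y' /(apart_inj Hi Hi) [].
- move=> i j Hi Hj Hij v; rewrite !nth_renamed_picks // !mvars_rename.
  by case/mapP=> y _ ->; apply/mapP => -[y' _ /(apart_inj Hi Hj) []].
- move=> i v Hi; rewrite nth_renamed_picks // mvars_rename => /mapP [y _ ->].
  by apply/negP => /cq_vars_lt; rewrite /rho /apart ltnNge leq_addr.
- by move=> i Hi; split; [have [_ _ [-> _]] := pick_match Hi; rewrite nth_renamed_picks |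
    rewrite -size_renamed_picks in Hi; apply: renamed_picks_arity].
Qed.

Lemma unfolded_rule_holds s tau : (forall x, glued_unifier x = tsubst tau (s x)) ->
  body_holds (unfolded_rule s).2 (fun v => gterm_of_term (tau v)) /\
  map nu (cq_ans q) = map (gsubst (fun v => gterm_of_term (tau v))) (unfolded_rule s).1.
Proof.
move=> Htau; split.
- move=> b /In_flatten [l [/In_map [m [/In_map [i [/In_iota Hi ->]] ->]] Hb]].
  have {}Hi : i < n by case/andP: Hi.
  have [_ Hsrc _] := pick_match Hi.
  case/In_map: Hb => a [/In_map [c [Hc ->]] ->] /=.
  move: (Hsrc c Hc); rewrite -!map_comp; congr vholds; apply: eq_map_In => u _ /=.
  rewrite -gterm_of_term_tsubst tsubstA tsubst_trename.
  rewrite (@eq_tsubst _ (fun x => term_of_gterm ((pick i).2 x))).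
    by rewrite tsubst_term_of_gterm term_of_gtermK.
  by move=> z _; rewrite -Htau glued_unifier_renamed.
- rewrite -!map_comp; apply: eq_map_In => x Hx /=.
  rewrite -gterm_of_term_tsubst -Htau glued_unifier_query ?term_of_gtermK //.
  by rewrite mem_cat In_mem.
Qed.

End Completeness.

Lemma produced_complete q M t : cq_eval (virtual_abox vdefs D M) q t ->
  exists r g, produced q M r /\ body_holds r.2 g /\ t = map (gsubst g) r.1.
Proof.
case=> nu [-> Hat].
have [pick Hpick] : exists pick, forall i, i < size (cq_body q) ->
    atom_match M nu (nth dcatom (cq_body q) i) (pick i).
  apply: (choice (fun i mg => i < size (cq_body q) -> atom_match M nu _ mg)) => i.
  case: (ltnP i (size (cq_body q))) => Hi; last by exists (dmap, fun _ => GC 0).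
  by have [m [g [Hm [Hsrc E]]]] := Hat _ (nth_In dcatom Hi); exists (m, g).
have Hu := glued_unifier_unifies Hpick.
have [s Hs] := mgu_exists (ex_intro (unifier^~ _) _ Hu).
have [tau Htau] := proj2 Hs _ Hu.
have [Hbody Hans] := unfolded_rule_holds Hpick Htau.
exists (unfolded_rule q pick s), (fun v => gterm_of_term (tau v)).
by split; first apply: (produced_unfolded_rule Hpick).
Qed.

Lemma variant_holds r r' g : variant r r' -> body_holds r.2 g ->
  exists g', body_holds r'.2 g' /\ map (gsubst g') r'.1 = map (gsubst g) r.1.
Proof.
case=> p [Hp ->] Hr.
pose pinv y := epsilon (inhabits 0) (fun x => p x = y).
have pK : cancel p pinv.
  move=> x; apply: Hp; exact: (epsilon_spec (inhabits 0) (fun z => p z = p x) (ex_intro _ x erefl)).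
have Eg t : gsubst (fun y => g (pinv y)) (trename p t) = gsubst g t.
  by rewrite gsubst_trename; apply: eq_gsubst => x _; rewrite pK.
exists (fun y => g (pinv y)); split.
- move=> b /In_map [a [Ha ->]] /=.
  by rewrite -map_comp (eq_map_In (g := gsubst g)) => [|t _]; [apply: Hr | apply: Eg].
- by rewrite /rename_rule /= -map_comp; apply: eq_map_In => t _; apply: Eg.
Qed.

Lemma unf_cq_correct q M Pi t : is_unf_cq q M Pi ->
  vholds vdefs D (VDef Pi) t <-> cq_eval (virtual_abox vdefs D M) q t.
Proof.
case=> H1 H2; rewrite vholds_VDef; split.
- by case=> r [g [Hr [Hh ->]]]; apply: produced_sound (H1 _ Hr) Hh.
- case/produced_complete=> r [g [Hp [Hh ->]]].
  have [r' [Hr' Hv]] := H2 _ Hp; have [g' [Hh' E]] := variant_holds Hv Hh.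
  by exists r', g'; rewrite E.
Qed.

Lemma unf_ucq_correct Q M Pi t : is_unf_ucq Q M Pi ->
  vholds vdefs D (VDef Pi) t <-> ucq_eval (virtual_abox vdefs D M) Q t.
Proof.
case=> H1 H2; rewrite vholds_VDef; split.
- case=> r [g [Hr [Hh ->]]]; have [q [Hq Hp]] := H1 _ Hr.
  by exists q; split; last apply: produced_sound Hp Hh.
- case=> q [Hq /produced_complete [r [g [Hp [Hh ->]]]]].
  have [r' [Hr' Hv]] := H2 _ _ Hq Hp; have [g' [Hh' E]] := variant_holds Hv Hh.
  by exists r', g'; rewrite E.
Qed.

End Unfolding.

(** * Wrap and split *)

Lemma pname_eqbP : Equality.axiom pname_eqb.
Proof. by case=> [n|n|n] [m|m|m] /=; try (by constructor); apply: (iffP eqP) => [->|[]]. Qed.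

HB.instance Definition _ := hasDecEq.Build pname pname_eqbP.

Lemma sig_eqbP m1 m2 : reflect ((mhead m1).1 = (mhead m2).1 /\
    map Defs.shape (mhead m1).2 = map Defs.shape (mhead m2).2) (sig_eqb m1 m2).
Proof.
rewrite /sig_eqb terms_eqbE -[pname_eqb _ _]/(_ == _).
by apply: (iffP andP) => [[/eqP -> /eqP ->]|[-> ->]]; rewrite ?eqxx.
Qed.

Lemma sig_eqb_sym m1 m2 : sig_eqb m1 m2 = sig_eqb m2 m1.
Proof. by apply/sig_eqbP/sig_eqbP => -[-> ->]. Qed.

Lemma sig_reps_cover seen M m : List.In m M ->
  (exists2 m0, List.In m0 seen & sig_eqb m0 m) \/
  (exists2 m0, List.In m0 (sig_reps seen M) & sig_eqb m0 m).
Proof.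
elim: M seen => //= m1 M IH seen [<-|Hm]; case: ifP => Hseen.
- left; elim: seen Hseen => //= m0 seen IHs /orP [Hm0|/IHs [m0' Hm0' E]].
    by exists m0; [left | rewrite sig_eqb_sym].
  by exists m0'; [right|].
- by right; exists m1; [left | apply/sig_eqbP].
- exact: IH.
- case: (IH (m1 :: seen) Hm) => [[m0 [<-|Hm0] E]|[m0 Hm0 E]].
  + by right; exists m1; [left|].
  + by left; exists m0.
  + by right; exists m0; [right|].
Qed.

Lemma size_term_vars_shape t : size (term_vars (Defs.shape t)) = size (term_vars t).
Proof.
elim/term_nested_ind: t => [//|//|f ts IH] /=.
elim: ts IH => //= u ts IHts IH; rewrite !size_cat IH ?IHts //; last by left.
by move=> v Hv; apply: IH; right.
Qed.

Lemma size_leaves_shape ts0 ts : map Defs.shape ts0 = map Defs.shape ts ->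
  size (flatten (map term_vars ts0)) = size (flatten (map term_vars ts)).
Proof.
elim: ts0 ts => [|a ts0 IH] [|b ts] //= [E1 /IH E2].
by rewrite !size_cat E2 -size_term_vars_shape E1 size_term_vars_shape.
Qed.

Definition relabel_inverts (t : term) : Prop :=
  forall t0 n (g' g : nat -> gterm), Defs.shape t0 = Defs.shape t ->
  (forall k, k < size (term_vars t) -> g' (n + k) = g (nth 0 (term_vars t) k)) ->
  gsubst g' (relabel t0 n).1 = gsubst g t /\ (relabel t0 n).2 = n + size (term_vars t).

Lemma relabel_seq_inverts ts : (forall u, List.In u ts -> relabel_inverts u) ->
  forall ts0 n (g' g : nat -> gterm), map Defs.shape ts0 = map Defs.shape ts ->
  (forall k, k < size (flatten (map term_vars ts)) ->
     g' (n + k) = g (nth 0 (flatten (map term_vars ts)) k)) ->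
  map (gsubst g') (relabel_seq ts0 n).1 = map (gsubst g) ts /\
  (relabel_seq ts0 n).2 = n + size (flatten (map term_vars ts)).
Proof.
elim: ts => [|u ts IHts] IH [|u0 ts0] n g' g //=; first by rewrite addn0.
case=> E1 E2 Hg.
have [|H1 H2] := IH u (or_introl erefl) u0 n g' g E1.
  by move=> k Hk; rewrite Hg ?nth_cat ?Hk // size_cat (leq_trans Hk) ?leq_addr.
have [|H3 H4] := IHts (fun v Hv => IH v (or_intror Hv)) ts0 (relabel u0 n).2 g' g E2.
  move=> k Hk; rewrite H2 -addnA Hg; last by rewrite size_cat ltn_add2l.
  by rewrite nth_cat ltnNge leq_addr /= addKn.
by rewrite H1 H3 H4 H2 size_cat addnA.
Qed.

Lemma relabelP t : relabel_inverts t.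
Proof.
elim/term_nested_ind: t => [x|c|f ts IH] [y|d|h ts0] n g' g //.
- by move=> _ H /=; split; [have := H 0 isT; rewrite addn0 | rewrite addn1].
- by case=> -> /=; rewrite addn0.
- by case=> -> E Hg; have /= [-> ->] := relabel_seq_inverts IH E Hg.
Qed.

Lemma relabel_seq_gsubst ts0 ts (g' g : nat -> gterm) :
  map Defs.shape ts0 = map Defs.shape ts ->
  (forall k, k < size (flatten (map term_vars ts)) ->
     g' k = g (nth 0 (flatten (map term_vars ts)) k)) ->
  map (gsubst g') (relabel_seq ts0 0).1 = map (gsubst g) ts.
Proof.
by move=> E Hg; case: (@relabel_seq_inverts ts (fun u _ => @relabelP u) ts0 0 g' g E Hg).
Qed.

Lemma virtual_abox_wrap vdefs D M a :
  virtual_abox vdefs D (Defs.wrap M) a <-> virtual_abox vdefs D M a.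
Proof.
split.
- case=> _ [s [/In_map [m0 [Hm0 ->]] [Hsrc ->]]].
  have /vholds_VDef [r [g [/In_map [m [/In_filter [Hm /sig_eqbP [EL ES]] ->]] [Hb E]]]] :=
    Hsrc _ (or_introl erefl).
  exists m, g; split=> //; split=> //=; rewrite EL (relabel_seq_gsubst (g := g) ES) // => k Hk.
  have Hk0 : k < size (head_leaves m0) by rewrite (size_leaves_shape ES).
  have := congr1 (nth (GC 0) ^~ k) E.
  by rewrite -!map_comp !(nth_map 0) ?size_iota ?nth_iota.
- case=> m [s [Hm [Hsrc ->]]].
  have [[m0 []]|[m0 Hm0 Em0]] := sig_reps_cover [::] Hm.
  have [EL ES] := elimT (sig_eqbP m0 m) Em0.
  exists (wrap_group M m0), (fun j => s (nth 0 (head_leaves m) j)); split.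
    by apply/In_map; exists m0.
  split=> [b [<-|[]]|]; last by rewrite /= EL (relabel_seq_gsubst (g := s) ES).
  apply/vholds_VDef; exists (map TVar (head_leaves m), msrc m), s; split.
    by apply/In_map; exists m; split=> //; apply/In_filter.
  split=> //; rewrite -!map_comp /= (size_leaves_shape ES).
  by rewrite -[in RHS](mkseq_nth 0 (head_leaves m)) /mkseq -map_comp.
Qed.

Lemma split_aux_mapping xs PiF i : uniq (nth [::] xs i) ->
  split_mapping (Mapping (PAux i, map TVar (nth [::] xs i))
                         [:: (VDef (nth [::] PiF i), map TVar (nth [::] xs i))]) =
  [seq Mapping (PAux i, r.1) r.2 | r <- nth [::] PiF i].
Proof.
have vars_only_TVar ys : vars_only (map TVar ys) = Some ys by elim: ys => //= y ys ->.
by move=> U; rewrite /split_mapping /= vars_only_TVar eqxx U.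
Qed.

Lemma virtual_abox_split_aux vdefs D xs PiF i tup :
  (forall j, j < size xs -> uniq (nth [::] xs j)) -> i < size xs ->
  virtual_abox vdefs D (split_all (aux_mappings xs PiF)) (PAux i, tup) <->
  vholds vdefs D (VDef (nth [::] PiF i)) tup.
Proof.
move=> U Hi; split.
- case=> m [s [/In_flatten [l [/In_map [am [/In_map [j [/In_iota Hj ->]] ->]] Hl]]]].
  case=> Hsrc [Ei ->].
  have {}Hj : j < size xs by case/andP: Hj.
  rewrite split_aux_mapping ?U // in Hl.
  by case/In_map: Hl Ei Hsrc => r [Hr ->] /= [->] Hsrc; apply/vholds_VDef; exists r, s.
- case/vholds_VDef=> r [g [Hr [Hb ->]]].
  exists (Mapping (PAux i, r.1) r.2), g; split=> //.
  apply/In_flatten; eexists; split.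
    apply/In_map; eexists; split; last reflexivity.
    by apply/In_map; exists i; split=> //; apply/In_iota.
  by rewrite split_aux_mapping ?U //; apply/In_map; exists r.
Qed.

Lemma cq_eval_aux_query (A A' : gatom -> Prop) q xs Qs tup : size xs = size Qs ->
  (forall i tup', i < size xs -> A (PAux i, tup') <-> ucq_eval A' (nth [::] Qs i) tup') ->
  cq_eval A (aux_query q xs) tup <-> jucq_eval A' (jucq_of q xs Qs) tup.
Proof.
move=> Hsz HA; split=> -[nu [-> H]]; exists nu; split=> //=.
- move=> p Hp; have [j Hj Ep] := In_ex_nth ([::], [::]) Hp.
  rewrite size_zip -Hsz minnn in Hj; rewrite Ep nth_zip //=.
  by apply/HA => //; apply: (H (_, _)); apply/In_map; exists j; split=> //; apply/In_iota.
- move=> a /In_map [i [/In_iota /andP [_ Hi] ->]] /=; apply/HA => //.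
  apply: (H (_, _)); rewrite -nth_zip //; apply: nth_In.
  by rewrite size_zip -Hsz minnn.
Qed.

Theorem theorem4 (S : obda_spec) (q : cq) (C : seq (seq catom))
    (xs : seq (seq nat)) (Qs : seq ucq) (Pi : seq vrule) :
  obda_spec_wf S ->
  cq_over_ontology q ->
  cover_jucq_rewriting (sT S) q C xs Qs ->
  is_unf_opt (sM S) q xs Qs Pi ->
  is_M_translation (sSigma S) (svdefs S) (sM S) (VDef Pi) (jucq_of q xs Qs).
Proof.
move=> _ _ [_ [HxC [HQC [Hfv _]]]] [PiF [_ [HunfF HunfO]]] D _ tup.
have Huniq i : i < size xs -> uniq (nth [::] xs i) by rewrite HxC => /Hfv [].
rewrite (unf_cq_correct _ _ _ HunfO); apply: cq_eval_aux_query; first by rewrite HxC HQC.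
move=> i tup' Hi.
by rewrite virtual_abox_wrap virtual_abox_split_aux // (unf_ucq_correct _ _ _ (HunfF i Hi)).
Qed.
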